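(* For all $n\geq 1$, $s_{n,2}(112,122)=c_n=\frac{1}{n+1}\binom{2n}{n}$, the $n$-th Catalan number.
   Context: For positive integers $n,m$, $[n]_m$ denotes the regular multiset $\{1^m,\ldots,n^m\}$, and a permutation of $[n]_m$ is a sequence of length $nm$ in which each $i\in[n]$ appears exactly $m$ times. A sequence $\sigma$ contains a pattern $\pi=\pi_1\cdots\pi_k$ if it has a subsequence $\sigma_{i_1}\cdots\sigma_{i_k}$ ($i_1<\dots<i_k$) order-isomorphic to $\pi$, i.e. $\sigma_{i_a}<\sigma_{i_b}\iff\pi_a<\pi_b$ and $\sigma_{i_a}=\sigma_{i_b}\iff\pi_a=\pi_b$; otherwise it avoids $\pi$. $s_{n,m}(\Pi)$ is the number of permutations of $[n]_m$ avoiding all patterns in $\Pi$. *)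

From mathcomp Require Import all_boot.
Set Implicit Arguments. Unset Strict Implicit. Unset Printing Implicit Defensive.

Definition order_iso (t p : seq nat) : bool :=
  (size t == size p) &&
  [forall i : 'I_(size t), forall j : 'I_(size t),
     ((nth 0 t i < nth 0 t j) == (nth 0 p i < nth 0 p j)) &&
     ((nth 0 t i == nth 0 t j) == (nth 0 p i == nth 0 p j))].

Definition contains (sigma pi : seq nat) : bool :=
  [exists msk : (size sigma).-tuple bool, order_iso (mask msk sigma) pi].

Definition avoids_all (sigma : seq nat) (Pi : seq (seq nat)) : bool :=
  all (fun pi => ~~ contains sigma pi) Pi.

Definition is_multiperm (n m : nat) (s : seq nat) : bool :=
  all (fun x => 1 <= x <= n) s && all (fun i => count_mem i s == m) (iota 1 n).

Definition seq_of_tuple (n m : nat) (t : (n * m).-tuple 'I_n) : seq nat :=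
  map (fun i : 'I_n => (i : nat).+1) t.

Definition s_count (n m : nat) (Pi : seq (seq nat)) : nat :=
  #|[set t : (n * m).-tuple 'I_n |
       is_multiperm n m (seq_of_tuple t) && avoids_all (seq_of_tuple t) Pi]|.

Definition catalan (n : nat) : nat := 'C(n.*2, n) %/ n.+1.

From mathcomp Require Import all_boot zify.
Set Implicit Arguments. Unset Strict Implicit. Unset Printing Implicit Defensive.

(* A {112,122}-avoiding permutation s of [n]_2 is built letter by letter from a
   state (a, b), a <= b, meaning that the letters 1..a must still be placed
   twice and a+1..b once (start: (n, n)).  Avoidance forces the next letter to
   be either a (the first copy of the largest doubled letter, state (a-1, b))
   or b (the last copy of the largest remaining letter, allowed when a < b,
   state (a, b-1)).

   Ballot words
   are enumerated by an explicit duplicate-free list [ballot_words] whose size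
   is the ballot number 'C(a+b, b) - 'C(a+b, b+1), which for a = b = n is
   c_n. *)

Definition ballot_mult (a b i : nat) : nat := (0 < i <= a) + (0 < i <= b).

Lemma ballot_multDl a b i : 0 < a -> ballot_mult a b i = (a == i) + ballot_mult a.-1 b i.
Proof. rewrite /ballot_mult; lia. Qed.

Lemma ballot_multDr a b i : 0 < b -> ballot_mult a b i = (b == i) + ballot_mult a b.-1 i.
Proof. rewrite /ballot_mult; lia. Qed.

Fixpoint ballot_word (a b : nat) (s : seq nat) : bool :=
  match s with
  | [::] => (a == 0) && (b == 0)
  | x :: s' => (x == a) && (0 < a) && ballot_word a.-1 b s'
            || (x == b) && (a < b) && ballot_word a b.-1 s'
  end.

Lemma ballot_word_size a b s : ballot_word a b s -> size s = a + b.
Proof.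
elim: s a b => [|x s IH] a b /=; first by case/andP => /eqP -> /eqP ->.
by case/orP => /andP [/andP [_ h] /IH ->]; lia.
Qed.

Lemma ballot_word_count a b s : ballot_word a b s ->
  forall i, count_mem i s = ballot_mult a b i.
Proof.
elim: s a b => [|x s IH] a b /=; first by case/andP => /eqP -> /eqP -> [].
case/orP => /andP [/andP [/eqP -> h] /IH hcount] i; rewrite hcount.
  by rewrite (ballot_multDl _ _ h).
by rewrite (@ballot_multDr a b) //; lia.
Qed.

Lemma mem_count_gt0 (x : nat) s : (x \in s) = (0 < count_mem x s).
Proof. by rewrite -has_pred1 has_count. Qed.

Lemma ballot_mult_range a b s x : a <= b ->
  (forall i, count_mem i s = ballot_mult a b i) -> x \in s -> 0 < x <= b.
Proof. by move=> hab hcount; rewrite mem_count_gt0 hcount /ballot_mult; lia. Qed.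

Lemma subseq_pairE (y : nat) s : subseq [:: y; y] s = (1 < count_mem y s).
Proof.
elim: s => [|z s IH] //; case: (eqVneq z y) => [->|nzy] /=.
  by rewrite eqxx sub1seq mem_count_gt0.
by rewrite eq_sym (negbTE nzy) IH.
Qed.

Definition avoids112 (s : seq nat) : Prop := forall x y, x < y -> ~~ subseq [:: x; x; y] s.
Definition avoids122 (s : seq nat) : Prop := forall x y, x < y -> ~~ subseq [:: x; y; y] s.
Definition decreasing_above (a : nat) (s : seq nat) : Prop :=
  forall v w, a < v -> v < w -> ~~ subseq [:: v; w] s.

Lemma avoids112_subseq s t : subseq s t -> avoids112 t -> avoids112 s.
Proof. by move=> st h x y /h; apply: contra => /subseq_trans; apply. Qed.

Lemma avoids122_subseq s t : subseq s t -> avoids122 t -> avoids122 s.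
Proof. by move=> st h x y /h; apply: contra => /subseq_trans; apply. Qed.

Lemma decreasing_above_subseq a s t : subseq s t -> decreasing_above a t -> decreasing_above a s.
Proof. by move=> st h v w av /(h _ _ av); apply: contra => /subseq_trans; apply. Qed.

(* Letters above a are emitted as successive values of b, hence in
   decreasing order. *)
Lemma ballot_word_decreasing a b s : ballot_word a b s -> decreasing_above a s.
Proof.
elim: s a b => [|z s IH] a b //= hs v w av vw.
case/orP: hs => /andP [/andP [/eqP -> h] hs].
  by rewrite /= (_ : (v == a) = false); [apply: IH hs _ _ _ vw; lia | lia].
rewrite /=; case: (eqVneq v b) => [ev|_]; last exact: IH hs _ _ av vw.
by rewrite sub1seq mem_count_gt0 (ballot_word_count hs) /ballot_mult; lia.
Qed.

(* After the first copy of x, only letters < x or decreasing letters above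
   the current a follow, so x x y with x < y cannot occur. *)
Lemma ballot_word_avoids112 a b s : ballot_word a b s -> avoids112 s.
Proof.
elim: s a b => [|z s IH] a b //= hs x y xy.
case/orP: hs => /andP [/andP [/eqP -> h] hs] /=;
  case: eqVneq => [ex|_]; try exact: IH hs _ _ xy;
  by apply: (ballot_word_decreasing hs); lia.
Qed.

(* After x, every letter y > x remaining has multiplicity at most one, so
   x y y with x < y cannot occur. *)
Lemma ballot_word_avoids122 a b s : ballot_word a b s -> avoids122 s.
Proof.
elim: s a b => [|z s IH] a b //= hs x y xy.
case/orP: hs => /andP [/andP [/eqP -> h] hs] /=;
  case: eqVneq => [ex|_]; try exact: IH hs _ _ xy;
  by rewrite subseq_pairE (ballot_word_count hs) /ballot_mult; lia.
Qed.

(* In an avoiding word with the ballot multiplicities of state (a, b), a first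
   letter z <= a must be a: otherwise z a a would be an occurrence of 122. *)
Lemma avoiding_head_double a b z s : a <= b ->
  (forall i, count_mem i (z :: s) = ballot_mult a b i) -> avoids122 (z :: s) ->
  z <= a -> z = a.
Proof.
move=> hab hcount h122 za; apply/eqP; rewrite eqn_leq za leqNgt; apply/negP => az.
have := h122 z a az; rewrite /= eqxx subseq_pairE.
by have := hcount a; rewrite /= /ballot_mult; lia.
Qed.

(* Likewise a first letter z > a must be b: otherwise z b would be an increasing
   pair of letters above a. *)
Lemma avoiding_head_single a b z s : a <= b ->
  (forall i, count_mem i (z :: s) = ballot_mult a b i) -> decreasing_above a (z :: s) ->
  a < z -> z = b.
Proof.
move=> hab hcount hdec az.
have zb : z <= b by have := ballot_mult_range hab hcount (mem_head z s); lia.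
apply/eqP; rewrite eqn_leq zb leqNgt; apply/negP => zb'.
have := hdec z b az zb'; rewrite /= eqxx sub1seq mem_count_gt0.
by have := hcount b; rewrite /= /ballot_mult; lia.
Qed.

Lemma avoiding_ballot_word a b s : a <= b ->
  (forall i, count_mem i s = ballot_mult a b i) ->
  avoids112 s -> avoids122 s -> decreasing_above a s -> ballot_word a b s.
Proof.
elim: s a b => [|z s IH] a b hab hcount h112 h122 hdec /=.
  by have := hcount a; have := hcount b; rewrite /ballot_mult /=; lia.
have z_pos : 0 < z by have := ballot_mult_range hab hcount (mem_head z s); lia.
have h112' := avoids112_subseq (subseq_cons s z) h112.
have h122' := avoids122_subseq (subseq_cons s z) h122.
case: (leqP z a) => za.
- have ez := avoiding_head_double hab hcount h122 za; subst z.
  apply/orP; left; rewrite eqxx z_pos; apply: IH => //; first lia.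
  + by move=> i; have := hcount i; rewrite /= (ballot_multDl _ _ z_pos); lia.
  + move=> v w av vw; case: (eqVneq v a) => [ev|va].
      by subst v; have := h112 a w vw; rewrite /= eqxx.
    by apply: (decreasing_above_subseq (subseq_cons s a) hdec); lia.
- have ez := avoiding_head_single hab hcount hdec za; subst z.
  apply/orP; right; rewrite eqxx za; apply: IH => //; first lia.
  + by move=> i; have := hcount i; rewrite /= (ballot_multDr _ _ z_pos); lia.
  + exact: decreasing_above_subseq (subseq_cons s b) hdec.
Qed.

Fixpoint ballot_words (k a b : nat) : seq (seq nat) :=
  match k with
  | 0 => if (a == 0) && (b == 0) then [:: [::]] else [::]
  | k'.+1 => (if 0 < a then map (cons a) (ballot_words k' a.-1 b) else [::]) ++
             (if a < b then map (cons b) (ballot_words k' a b.-1) else [::])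
  end.

Lemma mem_map_cons (x a : nat) s L : (x :: s \in map (cons a) L) = (x == a) && (s \in L).
Proof.
case: eqP => [->|ne]; first by rewrite mem_map //; move=> u v [].
by apply/mapP => -[y _ [e _]].
Qed.

Lemma nil_notin_map_cons (a : nat) L : ([::] \in map (cons a) L) = false.
Proof. by apply/negbTE/mapP => -[]. Qed.

Lemma mem_ballot_words k a b s : a + b = k -> (s \in ballot_words k a b) = ballot_word a b s.
Proof.
elim: k a b s => [|k IH] a b s hk.
  have [-> ->] : a = 0 /\ b = 0 by lia.
  by case: s => [|x s] //=; rewrite andbF.
rewrite /= mem_cat; case: s => [|x s] /=.
  rewrite (_ : (a == 0) && (b == 0) = false); last lia.
  by case: (0 < a); case: (a < b); rewrite /= ?nil_notin_map_cons.
case ha: (0 < a); case hb: (a < b);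
  by rewrite /= ?in_nil ?andbF ?orbF ?mem_map_cons ?IH //; lia.
Qed.

Lemma uniq_ballot_words k a b : uniq (ballot_words k a b).
Proof.
have cons_inj c : injective (cons c : seq nat -> seq nat) by move=> u v [].
elim: k a b => [|k IH] a b /=; first by case: ifP.
rewrite cat_uniq; apply/and3P; split.
- by case: ifP => // _; rewrite map_inj_uniq.
- case: (ltnP a b) => // ab; apply/hasPn => _ /mapP [s _ ->].
  by case: (0 < a); rewrite // mem_map_cons; lia.
- by case: ifP => // _; rewrite map_inj_uniq.
Qed.

Lemma size_ballot_words k a b : a + b = k -> a <= b ->
  size (ballot_words k a b) + 'C(k, b.+1) = 'C(k, b).
Proof.
elim: k a b => [|k IH] a b hk hab; first by have [-> ->] : a = 0 /\ b = 0 by lia.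
case: b hk hab => [|b] hk hab; first lia.
rewrite /= size_cat !binS !(fun_if size) !size_map.
have IHl : 0 < a -> size (ballot_words k a.-1 b.+1) + 'C(k, b.+2) = 'C(k, b.+1).
  by move=> a0; apply: IH; lia.
have IHr : a < b.+1 -> size (ballot_words k a b) + 'C(k, b.+1) = 'C(k, b).
  by move=> ab; apply: IH; lia.
case: (posnP a) => [a0|a0]; case: (ltnP a b.+1) => ab.
- have bk : b = k by lia.
  have h1 : 'C(k, k.+1) = 0 by rewrite bin_small.
  have h2 : 'C(k, k.+2) = 0 by rewrite bin_small.
  by subst b; have := IHr ab; rewrite /=; lia.
- by lia.
- by have := IHl a0; have := IHr ab; rewrite /=; lia.
- have [ea kb] : a = b.+1 /\ k = b + b.+1 by lia.
  have sym : 'C(k, b.+1) = 'C(k, b) by rewrite -bin_sub; [congr 'C(_, _) | ]; lia.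
  by have := IHl a0; subst a k; rewrite /= in sym *; lia.
Qed.

(* For a = b = n the ballot number is the Catalan number, since
   (n+1) 'C(2n, n+1) = n 'C(2n, n). *)
Lemma size_ballot_words_diag n : size (ballot_words (n + n) n n) = catalan n.
Proof.
have hsize := size_ballot_words (erefl (n + n)) (leqnn n).
have hleft := mul_bin_left (n + n) n; rewrite addnK in hleft.
rewrite /catalan -addnn (_ : 'C(n + n, n) = size (ballot_words (n + n) n n) * n.+1).
  by rewrite mulnK.
by nia.
Qed.

Lemma containsP (sg p : seq nat) :
  reflect (exists2 u, subseq u sg & order_iso u p) (contains sg p).
Proof.
apply: (iffP existsP) => [[msk hmsk]|[u /subseqP [m hm ->] hiso]].
  by exists (mask msk sg); first exact: mask_subseq.
by exists (Tuple (introT eqP hm)).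
Qed.

Lemma order_iso112P u :
  reflect (exists x y, x < y /\ u = [:: x; x; y]) (order_iso u [:: 1; 1; 2]).
Proof.
apply: (iffP idP) => [|[x [y [xy ->]]]].
  case/andP; case: u => [|u0 [|u1 [|u2 []]]] // _ /forallP hiso.
  have /forallP /(_ (@Ordinal 3 1 isT)) /andP [_ /eqP e01] := hiso (@Ordinal 3 0 isT).
  have /forallP /(_ (@Ordinal 3 2 isT)) /andP [/eqP l02 _] := hiso (@Ordinal 3 0 isT).
  by exists u0, u2; move: e01 l02 => /= /eqP <- ->.
apply/andP; split => //; apply/forallP => -[[|[|[|i]]] hi] //; apply/forallP => -[[|[|[|j]]] hj] //=;
  rewrite ?ltnn ?eqxx ?xy ?(ltn_eqF xy) ?(gtn_eqF xy) ?(ltnNge y x) ?(ltnW xy) //.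
Qed.

Lemma order_iso122P u :
  reflect (exists x y, x < y /\ u = [:: x; y; y]) (order_iso u [:: 1; 2; 2]).
Proof.
apply: (iffP idP) => [|[x [y [xy ->]]]].
  case/andP; case: u => [|u0 [|u1 [|u2 []]]] // _ /forallP hiso.
  have /forallP /(_ (@Ordinal 3 2 isT)) /andP [_ /eqP e12] := hiso (@Ordinal 3 1 isT).
  have /forallP /(_ (@Ordinal 3 1 isT)) /andP [/eqP l01 _] := hiso (@Ordinal 3 0 isT).
  by exists u0, u1; move: e12 l01 => /= /eqP <- ->.
apply/andP; split => //; apply/forallP => -[[|[|[|i]]] hi] //; apply/forallP => -[[|[|[|j]]] hj] //=;
  rewrite ?ltnn ?eqxx ?xy ?(ltn_eqF xy) ?(gtn_eqF xy) ?(ltnNge y x) ?(ltnW xy) //.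
Qed.

Lemma avoids112E s : avoids112 s <-> ~~ contains s [:: 1; 1; 2].
Proof.
split=> [h|/containsP h x y xy]; last first.
  by apply/negP => hs; apply: h; exists [:: x; x; y] => //; apply/order_iso112P; exists x, y.
by apply/containsP => -[u hs /order_iso112P [x [y [xy hu]]]]; subst u; exact: negP (h _ _ xy) hs.
Qed.

Lemma avoids122E s : avoids122 s <-> ~~ contains s [:: 1; 2; 2].
Proof.
split=> [h|/containsP h x y xy]; last first.
  by apply/negP => hs; apply: h; exists [:: x; y; y] => //; apply/order_iso122P; exists x, y.
by apply/containsP => -[u hs /order_iso122P [x [y [xy hu]]]]; subst u; exact: negP (h _ _ xy) hs.
Qed.

Lemma is_multipermP n m s :
  reflect (forall i, count_mem i s = (0 < i <= n) * m) (is_multiperm n m s).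
Proof.
apply: (iffP andP) => [[/allP hrange /allP hcount] i|hcount].
  case: (boolP (0 < i <= n)) => hi.
    by rewrite mul1n; apply/eqP/hcount; rewrite mem_iota; lia.
  by apply/count_memPn; apply: contra hi => /hrange.
split; apply/allP => x; last by rewrite mem_iota hcount => hx; apply/eqP; lia.
by rewrite mem_count_gt0 hcount; case: (0 < x <= n).
Qed.

Lemma avoiding_multiperm_ballot n s :
  is_multiperm n 2 s && avoids_all s [:: [:: 1; 1; 2]; [:: 1; 2; 2]] = ballot_word n n s.
Proof.
have multE i : (0 < i <= n) * 2 = ballot_mult n n i by rewrite /ballot_mult; lia.
rewrite /avoids_all /= andbT; apply/idP/idP.
- case/and3P => /is_multipermP hcount /avoids112E h112 /avoids122E h122.
  have hmult i : count_mem i s = ballot_mult n n i by rewrite hcount.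
  apply: avoiding_ballot_word => // v w nv vw; apply/negP.
  move=> /(subseq_trans (suffix_subseq [:: v] [:: w])); rewrite sub1seq.
  by move=> /(ballot_mult_range (leqnn n) hmult); lia.
- move=> hs; apply/and3P; split.
  + by apply/is_multipermP => i; rewrite multE; exact: ballot_word_count.
  + by apply/avoids112E; exact: ballot_word_avoids112 hs.
  + by apply/avoids122E; exact: ballot_word_avoids122 hs.
Qed.

Lemma card_encoded_tuples n m (P : pred (seq nat)) (L : seq (seq nat)) :
  uniq L -> (forall s, (s \in L) = P s) ->
  (forall s, P s -> size s = n.+1 * m /\ all (fun x => 0 < x <= n.+1) s) ->
  #|[set t : (n.+1 * m).-tuple 'I_n.+1 | P (seq_of_tuple t)]| = size L.
Proof.
move=> uniqL memL hP; rewrite -(size_image (@seq_of_tuple n.+1 m)).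
have succ_inj : injective (fun i : 'I_n.+1 => (i : nat).+1) by move=> i j [] /val_inj.
apply: perm_size; apply: uniq_perm => //.
  by rewrite map_inj_uniq ?enum_uniq // => t1 t2 /(inj_map succ_inj) /val_inj.
move=> s; rewrite memL; apply/imageP/idP => [[t]|Ps]; first by rewrite inE => ? ->.
have [sz /allP range] := hP s Ps.
have hsz : size (map (fun x => inord x.-1 : 'I_n.+1) s) == n.+1 * m by rewrite size_map sz.
suff decode : seq_of_tuple (Tuple hsz) = s by exists (Tuple hsz); rewrite ?inE decode.
rewrite /seq_of_tuple /= -map_comp; apply: map_id_in => x /range hx /=.
by rewrite inordK; lia.
Qed.

Theorem theorem2 (n : nat) (hn : 1 <= n) :
  s_count n 2 [:: [:: 1; 1; 2]; [:: 1; 2; 2]] = catalan n.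
Proof.
case: n hn => // n _.
rewrite /s_count -size_ballot_words_diag.
under eq_finset => t do rewrite avoiding_multiperm_ballot.
apply: card_encoded_tuples => [|s|s hs]; first exact: uniq_ballot_words.
  exact: mem_ballot_words.
split; first by rewrite (ballot_word_size hs); lia.
by apply/allP => x; apply: ballot_mult_range (leqnn _) (ballot_word_count hs).
Qed.
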